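(* Let $\tau>0$. The function $$x\mapsto\Bigl(\sum_{n=-\infty}^\infty\operatorname{sech}\pi\bigl(\tfrac{2\pi}\tau n+x\bigr)\Bigr)^2-\Bigl(\sum_{n=-\infty}^\infty(-1)^n\operatorname{sech}\pi\bigl(\tfrac{2\pi}\tau n+x\bigr)\Bigr)^2$$ is constant on $\mathbb R$. *)

From Stdlib Require Import Reals ZArith.
From Coquelicot Require Import Coquelicot.
Open Scope R_scope.

Definition sech (y : R) : R := 2 / (exp y + exp (- y)).

Definition is_biseries (f : Z -> R) (l : R) : Prop :=
  exists a b : R,
    is_series (fun n : nat => f (Z.of_nat n)) a /\
    is_series (fun n : nat => f (- Z.of_nat (S n))%Z) b /\
    l = a + b.

From Stdlib Require Import Reals ZArith Lia Lra.
From Coquelicot Require Import Coquelicot.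
Open Scope R_scope.

(* Write a = 2 pi / tau, s_n = sech (pi (a n + x)) and e_n = (-1)^n.  Expanding the squares of
   the truncations to |n| <= N gives the double sum of (1 - e_m e_n) s_m s_n, in which only odd
   m - n survive.  The identity tanh A - tanh B = sinh (A - B) sech A sech B, with
   A - B = pi a (m - n), rewrites it as 2 sum_m tanh (pi (a m + x)) V_N(m), where
   V_N(m) = sum_{|n| <= N} w (m - n) for the odd kernel w j = (1 - e_j) / sinh (pi a j).
   By oddness V_N(m) telescopes to kernel values of index beyond N - |m|, so
   V_N(m) = O(rho^(N - |m|)) with rho = exp (- pi a), while the tanh terms at two points x, y
   differ by O(rho^(2|m|)).  Hence the truncations at x and y differ by O(rho^N), and their
   limits coincide. *)

Lemma abs_nat_opp z : Z.abs_nat (- z) = Z.abs_nat z.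
Proof. destruct z; reflexivity. Qed.

Fixpoint sum_sym (N : nat) (f : Z -> R) : R :=
  match N with
  | O => f 0%Z
  | S N' => sum_sym N' f + f (Z.of_nat N) + f (- Z.of_nat N)%Z
  end.

Lemma sum_sym_ext N f g : (forall m, f m = g m) -> sum_sym N f = sum_sym N g.
Proof. intro E; induction N; simpl; rewrite ?IHN, ?E; reflexivity. Qed.

Lemma sum_sym_plus N f g : sum_sym N (fun m => f m + g m) = sum_sym N f + sum_sym N g.
Proof. induction N; simpl; [|rewrite IHN]; ring. Qed.

Lemma sum_sym_minus N f g : sum_sym N (fun m => f m - g m) = sum_sym N f - sum_sym N g.
Proof. induction N; simpl; [|rewrite IHN]; ring. Qed.

Lemma sum_sym_opp N f : sum_sym N (fun m => - f m) = - sum_sym N f.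
Proof. induction N; simpl; [|rewrite IHN]; ring. Qed.

Lemma sum_sym_scal_l N c f : sum_sym N (fun m => c * f m) = c * sum_sym N f.
Proof. induction N; simpl; [|rewrite IHN]; ring. Qed.

Lemma sum_sym_mult N f g :
  sum_sym N f * sum_sym N g = sum_sym N (fun m => sum_sym N (fun n => f m * g n)).
Proof.
  generalize N at 2 4; induction N; intro M; simpl;
    rewrite ?Rmult_plus_distr_r, ?IHN, <- !sum_sym_scal_l; reflexivity.
Qed.

Lemma sum_sym_swap N F :
  sum_sym N (fun m => sum_sym N (fun n => F m n)) = sum_sym N (fun n => sum_sym N (fun m => F m n)).
Proof.
  generalize N at 2 3; induction N; intro M; simpl; [reflexivity|].
  rewrite IHN, <- !sum_sym_plus; reflexivity.
Qed.

Lemma sum_sym_opp_arg N f : sum_sym N (fun m => f (- m)%Z) = sum_sym N f.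
Proof. induction N; simpl; [reflexivity|]. rewrite IHN; ring. Qed.

Lemma sum_sym_odd N f : (forall m, f (- m)%Z = - f m) -> sum_sym N f = 0.
Proof.
  intro Hf.
  assert (E : sum_sym N f = sum_sym N (fun m => -1 * f m)).
  { rewrite <- (sum_sym_opp_arg N f) at 1. apply sum_sym_ext; intro; rewrite Hf; ring. }
  rewrite sum_sym_scal_l in E. lra.
Qed.

Lemma sum_sym_shift N g :
  sum_sym N (fun k => g (k + 1)%Z) = sum_sym N g + g (Z.of_nat N + 1)%Z - g (- Z.of_nat N)%Z.
Proof.
  induction N; cbn [sum_sym]; [simpl; ring|].
  rewrite IHN. replace (- Z.of_nat (S N) + 1)%Z with (- Z.of_nat N)%Z by lia.
  replace (Z.of_nat (S N)) with (Z.of_nat N + 1)%Z by lia. ring.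
Qed.

Lemma sum_sym_Rabs_le N f g :
  (forall m, (Z.abs m <= Z.of_nat N)%Z -> Rabs (f m) <= g m) -> Rabs (sum_sym N f) <= sum_sym N g.
Proof.
  induction N; intro H; cbn [sum_sym]; [apply H; simpl; lia|].
  assert (IH : Rabs (sum_sym N f) <= sum_sym N g) by (apply IHN; intros; apply H; lia).
  pose proof (H (Z.of_nat (S N)) ltac:(lia)). pose proof (H (- Z.of_nat (S N))%Z ltac:(lia)).
  pose proof (Rabs_triang (sum_sym N f + f (Z.of_nat (S N))) (f (- Z.of_nat (S N))%Z)).
  pose proof (Rabs_triang (sum_sym N f) (f (Z.of_nat (S N)))). lra.
Qed.

Lemma sum_sym_pow_abs N r : r <> 1 ->
  sum_sym N (fun m => r ^ Z.abs_nat m) = (1 + r - 2 * r ^ S N) / (1 - r).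
Proof.
  intro Hr. assert (1 - r <> 0) by lra.
  induction N; cbn [sum_sym]; [simpl; field; assumption|].
  rewrite IHN, abs_nat_opp, Zabs2Nat.id. simpl. field. assumption.
Qed.

Lemma sum_sym_sum_n N f :
  sum_sym N f = sum_n (fun k => f (Z.of_nat k)) N + sum_n (fun k => f (- Z.of_nat (S k))%Z) N
                - f (- Z.of_nat (S N))%Z.
Proof.
  induction N; [rewrite !sum_O; simpl; ring|].
  cbn [sum_sym]. rewrite IHN, !sum_Sn. unfold plus; simpl. ring.
Qed.

Lemma is_lim_seq_sum_sym f l : is_biseries f l -> is_lim_seq (fun N => sum_sym N f) l.
Proof.
  intros [a [b [Ha [Hb ->]]]].
  eapply is_lim_seq_ext; [intro N; symmetry; apply sum_sym_sum_n|].
  replace (a + b) with (a + b - 0) by ring.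
  apply is_lim_seq_minus'; [apply is_lim_seq_plus'; assumption|].
  apply ex_series_lim_0. exists b. exact Hb.
Qed.

Lemma ex_biseries_geom f C r : 0 <= r < 1 ->
  (forall n, Rabs (f n) <= C * r ^ Z.abs_nat n) -> exists l, is_biseries f l.
Proof.
  intros Hr Hf.
  assert (G : forall c, ex_series (fun k => c * r ^ k)).
  { intro c. apply (ex_series_scal_l c (fun k => r ^ k)).
    exists (/ (1 - r)). apply is_series_geom. rewrite Rabs_right; lra. }
  destruct (@ex_series_le _ R_CompleteNormedModule (fun k => f (Z.of_nat k)) (fun k => C * r ^ k))
    as [a Ha]; [|apply G|].
  { intro k. pose proof (Hf (Z.of_nat k)). rewrite Zabs2Nat.id in *. assumption. }
  destruct (@ex_series_le _ R_CompleteNormedModule (fun k => f (- Z.of_nat (S k))%Z)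
                          (fun k => C * r * r ^ k)) as [b Hb]; [|apply G|].
  { intro k. pose proof (Hf (- Z.of_nat (S k))%Z). rewrite abs_nat_opp, Zabs2Nat.id in *.
    simpl in *. rewrite Rmult_assoc. assumption. }
  exists (a + b), a, b. auto.
Qed.

Lemma is_lim_seq_geom_bound u M r :
  0 <= r < 1 -> (forall N, Rabs (u N) <= M * r ^ N) -> is_lim_seq u 0.
Proof.
  intros Hr Hu.
  assert (G : forall c, is_lim_seq (fun N => c * r ^ N) 0).
  { intro c. replace (Finite 0) with (Rbar_mult c 0) by (simpl; f_equal; ring).
    apply is_lim_seq_scal_l, is_lim_seq_geom. rewrite Rabs_right; lra. }
  apply is_lim_seq_le_le with (fun N => - M * r ^ N) (fun N => M * r ^ N); [|apply G..].
  intro N. rewrite Ropp_mult_distr_l_reverse. apply Rabs_le_between, Hu.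
Qed.

Section AntisymmetricKernel.

Variable w : Z -> R.
Hypothesis w_odd : forall j, w (- j) = - w j.

Definition kernel_sum (N : nat) (m : Z) : R := sum_sym N (fun n => w (m - n)).

Lemma sum_sym_antisym N g :
  sum_sym N (fun m => sum_sym N (fun n => w (m - n) * (g m - g n)))
  = 2 * sum_sym N (fun m => g m * kernel_sum N m).
Proof.
  assert (Hswap : forall n, sum_sym N (fun m => w (m - n) * g n) = - (g n * kernel_sum N n)).
  { intro n. unfold kernel_sum. rewrite <- sum_sym_scal_l, <- sum_sym_opp.
    apply sum_sym_ext; intro m. replace (m - n)%Z with (- (n - m))%Z by ring. rewrite w_odd. ring. }
  transitivity (sum_sym N (fun m => g m * kernel_sum N m)
                - sum_sym N (fun m => sum_sym N (fun n => w (m - n) * g n))).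
  { rewrite <- sum_sym_minus. apply sum_sym_ext; intro m.
    unfold kernel_sum. rewrite <- sum_sym_scal_l, <- sum_sym_minus. apply sum_sym_ext; intro; ring. }
  rewrite sum_sym_swap, (sum_sym_ext N _ _ Hswap), sum_sym_opp. ring.
Qed.

Lemma kernel_sum_opp N m : kernel_sum N (- m) = - kernel_sum N m.
Proof.
  unfold kernel_sum. rewrite <- sum_sym_opp_arg, <- sum_sym_opp.
  apply sum_sym_ext; intro n. replace (- m - - n)%Z with (- (m - n))%Z by ring. apply w_odd.
Qed.

Lemma kernel_sum_0 N : kernel_sum N 0 = 0.
Proof. apply sum_sym_odd. intro n. replace (0 - - n)%Z with (- (0 - n))%Z by ring. apply w_odd. Qed.

Lemma kernel_sum_succ N m :
  kernel_sum N (m + 1) = kernel_sum N m + w (m + Z.of_nat N + 1) - w (m - Z.of_nat N).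
Proof.
  assert (Hrefl : forall k, kernel_sum N k = sum_sym N (fun n => w (k + n))).
  { intro k. unfold kernel_sum. rewrite <- sum_sym_opp_arg. apply sum_sym_ext; intro; f_equal; ring. }
  rewrite !Hrefl.
  transitivity (sum_sym N (fun k => w (m + (k + 1)))); [apply sum_sym_ext; intro; f_equal; ring|].
  rewrite (sum_sym_shift N (fun n => w (m + n))). do 3 f_equal; ring.
Qed.

Variables r C : R.
Hypothesis r_pos : 0 < r.
Hypothesis r_lt_1 : r < 1.
Hypothesis w_bound : forall j, Rabs (w j) <= C * r ^ Z.abs_nat j.

Lemma kernel_sum_bound_nat N m : (m <= N)%nat ->
  Rabs (kernel_sum N (Z.of_nat m)) <= C / (1 - r) * r ^ S N * (/ r ^ m - r ^ m).
Proof.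
  induction m as [|m IH]; intro Hm.
  { rewrite kernel_sum_0, Rabs_R0. simpl. rewrite Rinv_1. lra. }
  specialize (IH ltac:(lia)).
  replace (Z.of_nat (S m)) with (Z.of_nat m + 1)%Z by lia. rewrite kernel_sum_succ.
  pose proof (w_bound (Z.of_nat m + Z.of_nat N + 1)) as Bhi.
  pose proof (w_bound (Z.of_nat m - Z.of_nat N)) as Blo.
  replace (Z.abs_nat (Z.of_nat m + Z.of_nat N + 1)) with (m + S N)%nat in Bhi by lia.
  replace (Z.abs_nat (Z.of_nat m - Z.of_nat N)) with (N - m)%nat in Blo by lia.
  assert (EN : r ^ S N = r * r ^ (N - m) * r ^ m).
  { replace (S N) with (S ((N - m) + m)) by lia. simpl. rewrite pow_add. ring. }
  rewrite pow_add, EN in Bhi. rewrite EN in IH |- *. change (r ^ S m) with (r * r ^ m).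
  set (P := r ^ m) in *. set (Q := r ^ (N - m)) in *.
  assert (0 < P) by (apply pow_lt; lra). assert (0 < Q) by (apply pow_lt; lra).
  set (K := C / (1 - r)) in *.
  assert (HC : C = K * (1 - r)) by (unfold K; field; lra). rewrite HC in Bhi, Blo.
  (* The bound B(m) = K r^(N+1) (r^-m - r^m) satisfies
     B(m+1) = B(m) + C r^(N+1+m) + C r^(N-m): it pays exactly for the two new kernel terms. *)
  assert (Hstep : K * (r * Q * P) * (/ P - P) + K * (1 - r) * (P * (r * Q * P)) + K * (1 - r) * Q
                  = K * (r * Q * P) * (/ (r * P) - r * P)) by (field; lra).
  pose proof (Rabs_triang (kernel_sum N (Z.of_nat m) + w (Z.of_nat m + Z.of_nat N + 1))
                          (- w (Z.of_nat m - Z.of_nat N))).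
  pose proof (Rabs_triang (kernel_sum N (Z.of_nat m)) (w (Z.of_nat m + Z.of_nat N + 1))).
  rewrite Rabs_Ropp in *. unfold Rminus in *. lra.
Qed.

Lemma kernel_sum_bound N m : (Z.abs m <= Z.of_nat N)%Z ->
  Rabs (kernel_sum N m) <= C / (1 - r) * r ^ S N / r ^ Z.abs_nat m.
Proof.
  intro Hm.
  assert (Hnat : Rabs (kernel_sum N (Z.of_nat (Z.abs_nat m)))
                 <= C / (1 - r) * r ^ S N / r ^ Z.abs_nat m).
  { assert (0 <= C) by (pose proof (w_bound 0); pose proof (Rabs_pos (w 0)); simpl in *; lra).
    assert (0 < r ^ Z.abs_nat m) by (apply pow_lt; lra).
    assert (0 < r ^ S N) by (apply pow_lt; lra).
    assert (0 <= C / (1 - r) * r ^ S N) by (apply Rmult_le_pos; [apply Rdiv_le_0_compat|]; lra).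
    eapply Rle_trans; [apply kernel_sum_bound_nat; lia|].
    unfold Rdiv at 2. apply Rmult_le_compat_l; lra. }
  destruct (Z_le_gt_dec 0 m).
  - rewrite Zabs2Nat.id_abs, Z.abs_eq in Hnat by lia. exact Hnat.
  - rewrite Zabs2Nat.id_abs, Z.abs_neq, kernel_sum_opp, Rabs_Ropp in Hnat by lia. exact Hnat.
Qed.

Lemma kernel_sum_weighted_vanishes g D :
  (forall m, Rabs (g m) <= D * (r ^ Z.abs_nat m) ^ 2) ->
  is_lim_seq (fun N => sum_sym N (fun m => g m * kernel_sum N m)) 0.
Proof.
  intro Hg.
  assert (HD : 0 <= D) by (pose proof (Hg 0%Z); pose proof (Rabs_pos (g 0%Z)); simpl in *; lra).
  assert (HC : 0 <= C) by (pose proof (w_bound 0); pose proof (Rabs_pos (w 0)); simpl in *; lra).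
  set (K := D * (C / (1 - r))).
  assert (HK : 0 <= K) by (apply Rmult_le_pos; [|apply Rdiv_le_0_compat]; lra).
  apply (is_lim_seq_geom_bound _ (K * r * ((1 + r) / (1 - r))) r); [lra|]. intro N.
  assert (Hterm : forall m, (Z.abs m <= Z.of_nat N)%Z ->
            Rabs (g m * kernel_sum N m) <= K * r ^ S N * r ^ Z.abs_nat m).
  { intros m Hm. rewrite Rabs_mult.
    assert (0 < r ^ Z.abs_nat m) by (apply pow_lt; lra).
    eapply Rle_trans;
      [apply Rmult_le_compat; [apply Rabs_pos.. | apply Hg | apply kernel_sum_bound, Hm]|].
    right. unfold K. field. lra. }
  eapply Rle_trans; [apply sum_sym_Rabs_le, Hterm|].
  rewrite sum_sym_scal_l, sum_sym_pow_abs by lra.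
  assert (0 < r ^ S N) by (apply pow_lt; lra).
  assert (Hfrac : (1 + r - 2 * r ^ S N) / (1 - r) <= (1 + r) / (1 - r)).
  { unfold Rdiv. apply Rmult_le_compat_r; [apply Rlt_le, Rinv_0_lt_compat|]; lra. }
  change (r ^ S N) with (r * r ^ N).
  assert (0 <= K * (r * r ^ N)) by (apply Rmult_le_pos; [|apply Rmult_le_pos; [|apply pow_le]]; lra).
  apply Rmult_le_compat_l with (r := K * (r * r ^ N)) in Hfrac; [|assumption].
  eapply Rle_trans; [exact Hfrac|]. right. ring.
Qed.

End AntisymmetricKernel.

Lemma exp_le_compat x y : x <= y -> exp x <= exp y.
Proof. intros [Hlt | ->]; [apply Rlt_le, exp_increasing, Hlt | apply Rle_refl]. Qed.

Lemma cosh_pos t : 0 < cosh t.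
Proof. unfold cosh. pose proof (exp_pos t). pose proof (exp_pos (- t)). lra. Qed.

Lemma sech_pos t : 0 < sech t.
Proof. unfold sech. pose proof (exp_pos t). pose proof (exp_pos (- t)). apply Rdiv_lt_0_compat; lra. Qed.

Lemma sinh_opp t : sinh (- t) = - sinh t.
Proof. unfold sinh. rewrite Ropp_involutive. field. Qed.

Lemma tanh_opp t : tanh (- t) = - tanh t.
Proof.
  unfold tanh. rewrite sinh_opp.
  replace (cosh (- t)) with (cosh t) by (unfold cosh; rewrite Ropp_involutive; lra).
  unfold Rdiv. ring.
Qed.

Lemma sinh_eq_0 t : sinh t = 0 -> t = 0.
Proof.
  intro H. rewrite <- sinh_0 in H.
  destruct (Rtotal_order t 0) as [Hlt | [Heq | Hgt]];
    [apply sinh_lt in Hlt | | apply sinh_lt in Hgt]; lra.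
Qed.

Lemma Rabs_sinh t : Rabs (sinh t) = sinh (Rabs t).
Proof.
  pose proof (sinh_0). destruct (Rle_lt_dec 0 t) as [Hnn | Hneg].
  - rewrite !(Rabs_right t) by lra. apply Rabs_right.
    destruct Hnn as [Hpos | <-]; [apply sinh_lt in Hpos|]; lra.
  - rewrite (Rabs_left t), sinh_opp by lra. apply Rabs_left. apply sinh_lt in Hneg. lra.
Qed.

Lemma tanh_sub A B : tanh A - tanh B = sinh (A - B) * (sech A * sech B).
Proof.
  assert (E1 : exp (A - B) = exp A * exp (- B)) by apply exp_plus.
  assert (E2 : exp (- (A - B)) = exp (- A) * exp B) by (rewrite <- exp_plus; f_equal; ring).
  unfold tanh, sinh at 3, cosh, sech. rewrite E1, E2. unfold sinh.
  pose proof (exp_pos A). pose proof (exp_pos (- A)). pose proof (exp_pos B). pose proof (exp_pos (- B)).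
  field. lra.
Qed.

Lemma sech_le_exp t : sech t <= 2 * exp (- Rabs t).
Proof.
  unfold sech. pose proof (exp_pos t). pose proof (exp_pos (- t)).
  assert (Hsum : exp (Rabs t) <= exp t + exp (- t)).
  { destruct (Rle_lt_dec 0 t); [rewrite Rabs_right | rewrite Rabs_left]; lra. }
  rewrite (exp_Ropp (Rabs t)). unfold Rdiv. apply Rmult_le_compat_l; [lra|].
  apply Rinv_le_contravar; [apply exp_pos | exact Hsum].
Qed.

Lemma Rabs_inv_sinh_le t t0 : 0 < t0 <= Rabs t ->
  Rabs (/ sinh t) <= 2 / (1 - exp (- (2 * t0))) * exp (- Rabs t).
Proof.
  intros [Ht0 Ht]. rewrite Rabs_inv, Rabs_sinh.
  set (u := exp (- Rabs t)). set (q := exp (- (2 * t0))).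
  assert (Hu : 0 < u) by apply exp_pos.
  assert (Hq : q < 1) by (rewrite <- exp_0; apply exp_increasing; lra).
  assert (Huq : u * u <= q).
  { unfold u, q. rewrite <- exp_plus. apply exp_le_compat. lra. }
  assert (Hsinh : sinh (Rabs t) = (1 - u * u) / (2 * u)).
  { unfold sinh, u. rewrite exp_Ropp. field. apply Rgt_not_eq, exp_pos. }
  rewrite Hsinh, Rinv_div. replace (2 / (1 - q) * u) with (2 * u / (1 - q)) by (field; lra).
  unfold Rdiv. apply Rmult_le_compat_l; [lra|]. apply Rinv_le_contravar; lra.
Qed.

Lemma one_sub_tanh_bounds u : 0 < 1 - tanh u <= 2 * exp (- 2 * u).
Proof.
  assert (E : 1 - tanh u = 2 * exp (- u) / (exp u + exp (- u))).
  { unfold tanh, sinh, cosh. pose proof (exp_pos u). pose proof (exp_pos (- u)). field. lra. }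
  pose proof (exp_pos u). pose proof (exp_pos (- u)).
  rewrite E. split; [apply Rdiv_lt_0_compat; lra|].
  replace (exp (- 2 * u)) with (exp (- u) * / exp u)
    by (rewrite <- exp_Ropp, <- exp_plus; f_equal; ring).
  unfold Rdiv. rewrite Rmult_assoc. apply Rmult_le_compat_l; [lra|].
  apply Rmult_le_compat_l; [lra|]. apply Rinv_le_contravar; lra.
Qed.

Lemma tanh_sub_le u v : Rabs (tanh u - tanh v) <= 2 * (exp (- 2 * u) + exp (- 2 * v)).
Proof.
  pose proof (one_sub_tanh_bounds u). pose proof (one_sub_tanh_bounds v).
  replace (tanh u - tanh v) with ((1 - tanh v) - (1 - tanh u)) by ring.
  apply Rabs_le; lra.
Qed.

Lemma tanh_sub_le_sign s u v : Rabs s = 1 ->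
  Rabs (tanh u - tanh v) <= 2 * (exp (- 2 * (s * u)) + exp (- 2 * (s * v))).
Proof.
  intro Hs. eapply Rle_trans; [|apply tanh_sub_le].
  right. destruct (Rcase_abs s); [replace s with (-1) by (rewrite Rabs_left in Hs; lra)
                                 |replace s with 1 by (rewrite Rabs_right in Hs; lra)].
  - replace (-1 * u) with (- u) by ring. replace (-1 * v) with (- v) by ring.
    rewrite !tanh_opp, <- Rabs_Ropp. f_equal. ring.
  - rewrite !Rmult_1_l. reflexivity.
Qed.

Lemma pow_neg1_even k : (-1) ^ k = if Nat.even k then 1 else -1.
Proof.
  induction k as [|k IH]; [reflexivity|].
  rewrite Nat.even_succ, <- Nat.negb_even. simpl. rewrite IH. destruct (Nat.even k); simpl; ring.
Qed.

Lemma Z_even_of_nat k : Z.even (Z.of_nat k) = Nat.even k.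
Proof.
  induction k as [|k IH]; [reflexivity|].
  rewrite Nat2Z.inj_succ, Z.even_succ, <- Z.negb_even, IH, Nat.even_succ, <- Nat.negb_even.
  reflexivity.
Qed.

Definition alt (n : Z) : R := (-1) ^ Z.abs_nat n.

Lemma alt_parity n : alt n = if Z.even n then 1 else -1.
Proof.
  unfold alt. rewrite pow_neg1_even, <- Z_even_of_nat, Zabs2Nat.id_abs.
  destruct (Z.abs_spec n) as [[_ ->] | [_ ->]]; rewrite ?Z.even_opp; reflexivity.
Qed.

Lemma alt_mul m n : alt m * alt n = alt (m - n).
Proof. rewrite !alt_parity, Z.even_sub. destruct (Z.even m), (Z.even n); simpl; ring. Qed.

Lemma alt_opp n : alt (- n) = alt n.
Proof. unfold alt. rewrite abs_nat_opp. reflexivity. Qed.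

Lemma Rabs_alt n : Rabs (alt n) = 1.
Proof. apply pow_1_abs. Qed.

Section SechLattice.

Variable a : R.
Hypothesis a_pos : 0 < a.

Definition rho : R := exp (- (PI * a)).

Lemma rho_pos : 0 < rho.
Proof. apply exp_pos. Qed.

Lemma rho_lt_1 : rho < 1.
Proof. unfold rho. rewrite <- exp_0. apply exp_increasing. pose proof PI_RGT_0. nra. Qed.

Lemma rho_pow_abs n : rho ^ Z.abs_nat n = exp (- (PI * a * Rabs (IZR n))).
Proof.
  unfold rho. rewrite <- Rpower_pow by apply exp_pos. unfold Rpower. rewrite ln_exp.
  rewrite INR_IZR_INZ, Zabs2Nat.id_abs, abs_IZR. f_equal. ring.
Qed.

(* The factor 1 - alt j kills the even j, among them j = 0 where the division by sinh 0 is junk. *)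
Definition kernel (j : Z) : R := (1 - alt j) / sinh (PI * a * IZR j).

Lemma kernel_opp j : kernel (- j) = - kernel j.
Proof.
  unfold kernel. rewrite alt_opp, opp_IZR, <- Ropp_mult_distr_r, sinh_opp.
  unfold Rdiv. rewrite Rinv_opp. ring.
Qed.

Lemma kernel_bound j : Rabs (kernel j) <= 4 / (1 - rho ^ 2) * rho ^ Z.abs_nat j.
Proof.
  pose proof rho_pos. pose proof rho_lt_1.
  assert (Hpa : 0 < PI * a) by (pose proof PI_RGT_0; nra).
  assert (Hrho2 : 0 < 1 - rho ^ 2) by nra.
  destruct (Z.eq_dec j 0) as [-> | Hj].
  { unfold kernel, alt. simpl. rewrite Rminus_diag, Rdiv_0_l, Rabs_R0.
    apply Rmult_le_pos; [apply Rdiv_le_0_compat|]; lra. }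
  assert (Hj1 : 1 <= Rabs (IZR j)).
  { rewrite <- abs_IZR. apply IZR_le. lia. }
  assert (Hsinh : Rabs (/ sinh (PI * a * IZR j)) <= 2 / (1 - rho ^ 2) * rho ^ Z.abs_nat j).
  { replace (rho ^ 2) with (exp (- (2 * (PI * a))))
      by (unfold rho; simpl; rewrite Rmult_1_r, <- exp_plus; f_equal; ring).
    rewrite rho_pow_abs. replace (PI * a * Rabs (IZR j)) with (Rabs (PI * a * IZR j)).
    - apply Rabs_inv_sinh_le. rewrite Rabs_mult, (Rabs_right (PI * a)) by lra. nra.
    - rewrite Rabs_mult, (Rabs_right (PI * a)) by lra. reflexivity. }
  assert (Halt : Rabs (1 - alt j) <= 2).
  { eapply Rle_trans; [apply Rabs_triang|]. rewrite Rabs_Ropp, Rabs_alt, Rabs_R1. lra. }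
  replace (4 / (1 - rho ^ 2) * rho ^ Z.abs_nat j) with (2 * (2 / (1 - rho ^ 2) * rho ^ Z.abs_nat j))
    by (field; lra).
  unfold kernel, Rdiv at 1. rewrite Rabs_mult.
  apply Rmult_le_compat; [apply Rabs_pos | apply Rabs_pos | exact Halt | exact Hsinh].
Qed.

Lemma sech_mul_kernel j A B : A - B = PI * a * IZR j ->
  (1 - alt j) * (sech A * sech B) = kernel j * (tanh A - tanh B).
Proof.
  intro HAB. unfold kernel. rewrite tanh_sub, HAB.
  destruct (Req_dec (sinh (PI * a * IZR j)) 0) as [H0 | Hnz].
  - apply sinh_eq_0 in H0. pose proof PI_RGT_0.
    assert (j = 0%Z) as -> by (apply eq_IZR; apply Rmult_integral in H0; destruct H0; nra).
    unfold alt, Rdiv. simpl. ring.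
  - field. exact Hnz.
Qed.

Definition node (x : R) (n : Z) : R := PI * (a * IZR n + x).

Definition sqdiff (x : R) (N : nat) : R :=
  sum_sym N (fun n => sech (node x n)) ^ 2 - sum_sym N (fun n => alt n * sech (node x n)) ^ 2.

Lemma sqdiff_kernel x N :
  sqdiff x N = 2 * sum_sym N (fun m => tanh (node x m) * kernel_sum kernel N m).
Proof.
  rewrite <- sum_sym_antisym by apply kernel_opp.
  unfold sqdiff. rewrite <- !Rsqr_pow2. unfold Rsqr. rewrite !sum_sym_mult, <- sum_sym_minus.
  apply sum_sym_ext; intro m. rewrite <- sum_sym_minus. apply sum_sym_ext; intro n.
  rewrite <- sech_mul_kernel, <- alt_mul; [ring|].
  unfold node. rewrite minus_IZR. ring.
Qed.

Lemma exp_node_le s x m : Rabs s = 1 -> s * IZR m = Rabs (IZR m) ->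
  exp (- 2 * (s * node x m)) <= exp (2 * PI * Rabs x) * (rho ^ Z.abs_nat m) ^ 2.
Proof.
  intros Hs Hsm. pose proof PI_RGT_0.
  assert (Hsx : - (s * x) <= Rabs x).
  { apply Rle_trans with (Rabs (s * x)); [rewrite <- Rabs_Ropp; apply Rle_abs|].
    rewrite Rabs_mult, Hs. lra. }
  rewrite rho_pow_abs, <- Rsqr_pow2. unfold Rsqr. rewrite <- !exp_plus.
  apply exp_le_compat. unfold node.
  replace (- 2 * (s * (PI * (a * IZR m + x))))
    with (- 2 * (PI * a * (s * IZR m)) + 2 * PI * - (s * x)) by ring.
  rewrite Hsm. nra.
Qed.

Lemma tanh_node_sub_le x y m :
  Rabs (tanh (node x m) - tanh (node y m))
  <= 2 * (exp (2 * PI * Rabs x) + exp (2 * PI * Rabs y)) * (rho ^ Z.abs_nat m) ^ 2.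
Proof.
  set (s := if Rle_dec 0 (IZR m) then 1 else -1).
  assert (Hs : Rabs s = 1 /\ s * IZR m = Rabs (IZR m)).
  { unfold s. destruct (Rle_dec 0 (IZR m)).
    - rewrite Rabs_R1, (Rabs_right (IZR m)) by lra. split; [reflexivity | ring].
    - rewrite Rabs_left, (Rabs_left (IZR m)) by lra. split; ring. }
  destruct Hs as [Hs Hsm].
  eapply Rle_trans; [apply (tanh_sub_le_sign s), Hs|].
  pose proof (exp_node_le s x m Hs Hsm). pose proof (exp_node_le s y m Hs Hsm). lra.
Qed.

Lemma sqdiff_sub_tendsto_0 x y : is_lim_seq (fun N => sqdiff x N - sqdiff y N) 0.
Proof.
  set (g m := tanh (node x m) - tanh (node y m)).
  apply is_lim_seq_ext with (fun N => 2 * sum_sym N (fun m => g m * kernel_sum kernel N m)).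
  { intro N. rewrite !sqdiff_kernel, <- Rmult_minus_distr_l, <- sum_sym_minus.
    f_equal. apply sum_sym_ext; intro m. unfold g. ring. }
  replace (Finite 0) with (Rbar_mult 2 0) by (simpl; f_equal; ring).
  apply is_lim_seq_scal_l.
  apply (kernel_sum_weighted_vanishes kernel kernel_opp rho _ rho_pos rho_lt_1 kernel_bound g
           (2 * (exp (2 * PI * Rabs x) + exp (2 * PI * Rabs y)))).
  intro m. apply tanh_node_sub_le.
Qed.

Lemma exp_neg_abs_node_le x n : exp (- Rabs (node x n)) <= exp (PI * Rabs x) * rho ^ Z.abs_nat n.
Proof.
  pose proof PI_RGT_0.
  rewrite rho_pow_abs, <- exp_plus. apply exp_le_compat.
  assert (Htri : Rabs (a * IZR n) - Rabs x <= Rabs (a * IZR n + x)).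
  { replace (a * IZR n + x) with (a * IZR n - - x) by ring.
    rewrite <- (Rabs_Ropp x). apply Rabs_triang_inv. }
  rewrite Rabs_mult, (Rabs_right a) in Htri by lra.
  unfold node. rewrite Rabs_mult, (Rabs_right PI) by lra. nra.
Qed.

Lemma ex_biseries_node x f : (forall n, Rabs (f n) <= sech (node x n)) -> exists l, is_biseries f l.
Proof.
  intro Hf. pose proof rho_pos. pose proof rho_lt_1.
  apply (ex_biseries_geom f (2 * exp (PI * Rabs x)) rho); [lra|]. intro n.
  eapply Rle_trans; [apply Hf|]. eapply Rle_trans; [apply sech_le_exp|].
  rewrite Rmult_assoc. apply Rmult_le_compat_l; [lra|]. apply exp_neg_abs_node_le.
Qed.

Lemma sqdiff_tendsto x S1 S2 :
  is_biseries (fun n => sech (node x n)) S1 ->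
  is_biseries (fun n => alt n * sech (node x n)) S2 ->
  is_lim_seq (sqdiff x) (S1 ^ 2 - S2 ^ 2).
Proof.
  intros H1 H2. apply is_lim_seq_sum_sym in H1, H2.
  replace (S1 ^ 2 - S2 ^ 2) with (S1 * S1 - S2 * S2) by ring.
  apply is_lim_seq_ext with
    (fun N => sum_sym N (fun n => sech (node x n)) * sum_sym N (fun n => sech (node x n))
            - sum_sym N (fun n => alt n * sech (node x n)) * sum_sym N (fun n => alt n * sech (node x n))).
  { intro N. unfold sqdiff. ring. }
  apply is_lim_seq_minus'; apply is_lim_seq_mult'; assumption.
Qed.

Lemma sqdiff_limit_indep x y S1 S2 T1 T2 :
  is_biseries (fun n => sech (node x n)) S1 ->
  is_biseries (fun n => alt n * sech (node x n)) S2 ->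
  is_biseries (fun n => sech (node y n)) T1 ->
  is_biseries (fun n => alt n * sech (node y n)) T2 ->
  S1 ^ 2 - S2 ^ 2 = T1 ^ 2 - T2 ^ 2.
Proof.
  intros HS1 HS2 HT1 HT2.
  pose proof (is_lim_seq_minus' _ _ _ _ (sqdiff_tendsto x S1 S2 HS1 HS2)
                                        (sqdiff_tendsto y T1 T2 HT1 HT2)) as L.
  apply is_lim_seq_unique in L. rewrite (is_lim_seq_unique _ _ (sqdiff_sub_tendsto_0 x y)) in L.
  injection L. lra.
Qed.

End SechLattice.

Theorem lemmaB1 (tau : R) (htau : 0 < tau) :
  exists c : R, forall x : R,
    exists S1 S2 : R,
      is_biseries (fun n : Z => sech (PI * (2 * PI / tau * IZR n + x))) S1 /\
      is_biseries (fun n : Z => (-1) ^ Z.abs_nat n * sech (PI * (2 * PI / tau * IZR n + x))) S2 /\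
      S1 ^ 2 - S2 ^ 2 = c.
Proof.
  set (a := 2 * PI / tau).
  assert (Ha : 0 < a) by (unfold a; pose proof PI_RGT_0; apply Rdiv_lt_0_compat; lra).
  assert (Hex : forall x, exists S1 S2,
             is_biseries (fun n => sech (node a x n)) S1 /\
             is_biseries (fun n => alt n * sech (node a x n)) S2).
  { intro x.
    destruct (ex_biseries_node a Ha x (fun n => sech (node a x n))) as [S1 H1].
    { intro n. pose proof (sech_pos (node a x n)). rewrite Rabs_right; lra. }
    destruct (ex_biseries_node a Ha x (fun n => alt n * sech (node a x n))) as [S2 H2].
    { intro n. pose proof (sech_pos (node a x n)). rewrite Rabs_mult, Rabs_alt, Rabs_right; lra. }
    exists S1, S2. split; assumption. }
  destruct (Hex 0) as (T1 & T2 & HT1 & HT2).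
  exists (T1 ^ 2 - T2 ^ 2). intro x.
  destruct (Hex x) as (S1 & S2 & HS1 & HS2).
  exists S1, S2. split; [exact HS1|]. split; [exact HS2|].
  exact (sqdiff_limit_indep a Ha x 0 S1 S2 T1 T2 HS1 HS2 HT1 HT2).
Qed.
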